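(* Let $(X,\mathcal{A})$ be a measurable space, $f,g\in\mathcal{F}_{[0,1]}^{(X,\mathcal{A})}$ comonotone, and $\star:[0,1]^2\to[0,1]$ continuous, non-decreasing in both arguments and bounded from below by the maximum ($a\star b\ge\max(a,b)$). Then for every monotone measure $m$ on $(X,\mathcal{A})$ with $m(X)=1$ and all $\alpha,\beta,\gamma,\lambda,\upsilon,\tau\in(0,\infty)$ with $1\le\alpha\lambda<\infty$, $0<\beta\upsilon\le1$, $0<\gamma\tau\le1$, $\lambda\ge\tau$ and $\lambda\ge\upsilon$, \[ \big[\mathbf{Su}(m,(f\star g)^{\alpha})\big]^{\lambda}\ \le\ \big[\mathbf{Su}(m,f^{\beta})\big]^{\upsilon}\star\big[\mathbf{Su}(m,g^{\gamma})\big]^{\tau}. \]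
   Context: A monotone measure on $(X,\mathcal{A})$ is $m:\mathcal{A}\to[0,\infty]$ with $m(\emptyset)=0$, $m(X)>0$, $m(A)\le m(B)$ for $A\subseteq B$. $\mathcal{F}_{[0,1]}^{(X,\mathcal{A})}$ is the set of $\mathcal{A}$-measurable $f:X\to[0,1]$. The Sugeno integral is $\mathbf{Su}(m,f)=\sup\{\min(t,m(\{f\ge t\})) : t\in(0,\infty]\}$. $f,g$ are comonotone if $(f(x)-f(y))(g(x)-g(y))\ge0$ for all $x,y$. Operations on functions are pointwise. *)

From HB Require Import structures.
From mathcomp Require Import all_boot all_order all_algebra.
From mathcomp Require Import all_classical all_reals all_analysis.
Set Implicit Arguments. Unset Strict Implicit. Unset Printing Implicit Defensive.
Import Order.TTheory GRing.Theory Num.Theory.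
Import numFieldNormedType.Exports.
Local Open Scope classical_set_scope.
Local Open Scope ring_scope.

Definition monotone_measure d (T : measurableType d) (R : realType)
  (m : set T -> \bar R) : Prop :=
  [/\ m set0 = 0%E,
      (0 < m setT)%E,
      (forall A, measurable A -> (0 <= m A)%E) &
      (forall A B, measurable A -> measurable B -> A `<=` B -> (m A <= m B)%E)].

Definition sugeno d (T : measurableType d) (R : realType)
  (m : set T -> \bar R) (f : T -> R) : \bar R :=
  ereal_sup [set Order.min t (m [set x | (t <= (f x)%:E)%E]) |
             t in [set t : \bar R | (0 < t)%E]].

Definition comonotone (T : Type) (R : realType) (f g : T -> R) : Prop :=
  forall x y, 0 <= (f x - f y) * (g x - g y).

Definition unit_int (R : realType) : set R := [set x | 0 <= x <= 1].

From HB Require Import structures.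
From mathcomp Require Import all_boot all_order all_algebra.
From mathcomp Require Import all_classical all_reals all_analysis.
Import Order.TTheory GRing.Theory Num.Theory.
Import numFieldNormedType.Exports.
Local Open Scope classical_set_scope.
Local Open Scope ring_scope.

(* Write A, B for the Sugeno integrals of f^beta and g^gamma and w := A^upsilon ⋆ B^tau.
   As ⋆ dominates the maximum and upsilon, tau <= lambda, both A and B are at most
   w^(1/lambda), so it suffices to bound each level r > w^(1/lambda) of the left-hand
   integral by w^(1/lambda). Since alpha lambda >= 1 we get r^(1/alpha) > w, so
   continuity of ⋆ yields a' > A^upsilon and b' > B^tau (or equal to 1) with
   a' ⋆ b' < r^(1/alpha); monotonicity of ⋆ then puts the level set
   {(f ⋆ g)^alpha >= r} inside {f > a'} u {g > b'}. Comonotonicity makes these two sets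
   nested, and each has measure at most A (resp. B), because beta upsilon <= 1 makes
   a'^beta exceed A. *)

Section PowRUnitInterval.
Context {R : realType}.
Implicit Types x w p q : R.

Lemma powR_itv01 {x p : R} : 0 <= x <= 1 -> 0 <= p -> 0 <= x `^ p <= 1.
Proof.
move=> /andP[x0 x1] p0; rewrite powR_ge0 /=.
by have := @ge0_ler_powR R p p0 x 1; rewrite powR1; apply; rewrite ?nnegrE.
Qed.

Lemma ger_powR_itv01 x p q : 0 <= x <= 1 -> 0 < p -> p <= q -> x `^ q <= x `^ p.
Proof.
move=> /andP[x0 x1] p0 pq; have [->|x_neq0] := eqVneq x 0.
  by rewrite !powR0 // gt_eqF // (lt_le_trans p0 pq).
by apply: ger_powR => //; rewrite x1 lt_neqAle eq_sym x_neq0 x0.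
Qed.

Lemma powR_invK x p : 0 <= x -> 0 < p -> (x `^ p^-1) `^ p = x.
Proof. by move=> x0 p0; rewrite -powRrM mulVf ?gt_eqF // powRr1. Qed.

Lemma powRK x p : 0 <= x -> 0 < p -> (x `^ p) `^ p^-1 = x.
Proof. by move=> x0 p0; rewrite -powRrM mulfV ?gt_eqF // powRr1. Qed.

Lemma le_powR_inv {x w p q : R} : 0 <= x <= 1 -> 0 < p -> p <= q ->
  x `^ p <= w -> x <= w `^ q^-1.
Proof.
move=> x01 p0 pq xw; have q0 := lt_le_trans p0 pq.
apply: (@le_trans _ _ (x `^ (p / q))).
  rewrite -{1}(@powRr1 _ x); last by case/andP: x01.
  by apply: ger_powR_itv01; rewrite ?divr_gt0 // ler_pdivrMr // mul1r.
have w0 : 0 <= w := le_trans (powR_ge0 x p) xw.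
by rewrite powRrM; apply: ge0_ler_powR;
  rewrite ?nnegrE ?invr_ge0 ?powR_ge0 ?(ltW q0).
Qed.

End PowRUnitInterval.

Lemma rat_approx_above {R : realType} {a e : R} : 0 <= a <= 1 -> 0 < e ->
  exists q : rat, [/\ a <= @ratr R q <= 1, `|a - @ratr R q| < e &
                      a < @ratr R q \/ @ratr R q = 1 :> R].
Proof.
move=> /andP[a0 a1] e0; have [->|a_neq1] := eqVneq a 1.
  by exists 1%R; rewrite rmorph1 lexx subrr normr0 e0; split => //; right.
have : a < Num.min (a + e) 1 by rewrite lt_min ltrDl e0 lt_neqAle a_neq1 a1.
move=> /rat_in_itvoo[q]; rewrite in_itv /= lt_min => /andP[aq /andP[qe q1]].
exists q; split; [by rewrite !ltW | | by left].
by rewrite distrC ger0_norm ?subr_ge0 ?ltW // ltrBlDl.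
Qed.

Section StarApproximation.
Context {R : realType} {star : R -> R -> R}.
Hypothesis star_cont : {within (@unit_int R) `*` (@unit_int R),
                         continuous (fun p : R * R => star p.1 p.2)}.

Lemma star_lt_rat_above {a b u : R} : 0 <= a <= 1 -> 0 <= b <= 1 ->
  star a b < u -> exists q q' : rat,
  [/\ a <= @ratr R q <= 1, b <= @ratr R q' <= 1,
      a < @ratr R q \/ @ratr R q = 1 :> R, b < @ratr R q' \/ @ratr R q' = 1 :> R &
      star (@ratr R q) (@ratr R q') < u].
Proof.
move=> a01 b01 ab_u; have e0 : 0 < u - star a b by rewrite subr_gt0.
move/subspace_continuousP: star_cont => /(_ (a, b) (conj a01 b01)).
move/cvgrPdist_lt => /(_ _ e0); rewrite near_withinE => /nbhs_ballP[e e0' near_ab].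
have [q [aq aqe aq1]] := rat_approx_above a01 e0'.
have [q' [bq' bqe bq1]] := rat_approx_above b01 e0'.
have itv01 (x y : R) : 0 <= x <= 1 -> x <= y <= 1 -> 0 <= y <= 1.
  by move=> /andP[x0 _] /andP[xy ->]; rewrite (le_trans x0 xy).
exists q, q'; split => //.
have /= := near_ab (ratr q, ratr q') (conj aqe bqe).
move=> /(_ (conj (itv01 _ _ a01 aq) (itv01 _ _ b01 bq'))).
rewrite ltr_distlC => /andP[_].
by rewrite addrC subrK.
Qed.

End StarApproximation.

Lemma comonotone_strict_superlevel_nested {T : Type} {R : realType}
    {phi psi : T -> R} :
  comonotone phi psi -> forall a b : R,
  [set x | a < phi x] `<=` [set x | b < psi x] \/
  [set x | b < psi x] `<=` [set x | a < phi x].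
Proof.
move=> cmon a b.
have [|not_sub] := pselect ([set x | a < phi x] `<=` [set x | b < psi x]); first by left.
right => y /= psi_y; rewrite ltNge; apply/negP => phi_y.
apply: not_sub => x /= phi_x.
rewrite ltNge; apply/negP => psi_x.
have dphi : 0 < phi x - phi y by rewrite subr_gt0 (le_lt_trans phi_y phi_x).
have dpsi : psi x - psi y < 0 by rewrite subr_lt0 (le_lt_trans psi_x psi_y).
by move: (cmon x y); rewrite leNgt (pmulr_rlt0 _ dphi) dpsi.
Qed.

Section LevelSets.
Context d (T : measurableType d) (R : realType).
Implicit Types phi psi : T -> R.

Lemma measurable_sublevel phi r : measurable_fun setT phi ->
  measurable [set x | phi x <= r].
Proof.
move=> mphi; rewrite (_ : [set x | _] = setT `&` phi @^-1` `]-oo, r]).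
  exact: mphi.
by apply/seteqP; split => x /=; rewrite in_itv /=; [move=> h; split | case].
Qed.

Lemma measurable_strict_superlevel phi r : measurable_fun setT phi ->
  measurable [set x | r < phi x].
Proof.
move=> mphi; rewrite (_ : [set x | _] = setT `&` phi @^-1` `]r, +oo[).
  exact: mphi.
by apply/seteqP; split => x /=; rewrite in_itv /= andbT; [move=> h; split | case].
Qed.

Lemma measurable_superlevel phi r : measurable_fun setT phi ->
  measurable [set x | (r%:E <= (phi x)%:E)%E].
Proof.
move=> mphi; rewrite (_ : [set x | _] = setT `&` phi @^-1` `[r, +oo[).
  exact: mphi.
apply/seteqP; split => x /=; rewrite in_itv /= andbT lee_fin.
  by move=> h; split.
by case.
Qed.

Variable star : R -> R -> R.
Hypothesis star_cont : {within (@unit_int R) `*` (@unit_int R),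
                         continuous (fun p : R * R => star p.1 p.2)}.
Hypothesis star_mono : forall a a' b b' : R, 0 <= a <= 1 -> 0 <= a' <= 1 ->
  0 <= b <= 1 -> 0 <= b' <= 1 -> a <= a' -> b <= b' -> star a b <= star a' b'.

(* [{star f g < u}] is the countable union of the rectangles [{f <= q} `&` {g <= q'}]
   over rationals with [star q q' < u]. *)
Lemma measurable_fun_star phi psi :
  measurable_fun setT phi -> measurable_fun setT psi ->
  (forall x, 0 <= phi x <= 1) -> (forall x, 0 <= psi x <= 1) ->
  measurable_fun setT (fun x => star (phi x) (psi x)).
Proof.
move=> mphi mpsi phi01 psi01.
apply: (measurability _ (measurable_realfun.RGenCInfty.measurableE R)).
move=> _ [_ [u ->] <-].
pose rect (q q' : rat) := if [&& 0 <= @ratr R q <= 1, 0 <= @ratr R q' <= 1 &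
                                 star (ratr q) (ratr q') < u]
  then [set x | phi x <= ratr q] `&` [set x | psi x <= ratr q'] else set0.
rewrite (_ : _ `&` _ = ~` \bigcup_q \bigcup_q' rect q q').
  apply/measurableC/bigcupT_measurable_rat => q.
  apply: bigcupT_measurable_rat => q'; rewrite /rect; case: ifP => _.
    by apply: measurableI; exact: measurable_sublevel.
  exact: measurable0.
apply/seteqP; split => y /=.
  case=> _; rewrite in_itv /= andbT => u_le [q _ [q' _]].
  rewrite /rect; case: and3P => // -[q01 q'01 lt_u] [/= phi_q psi_q'].
  have := star_mono _ _ _ _ (phi01 y) q01 (psi01 y) q'01 phi_q psi_q'.
  by move=> /le_lt_trans /(_ lt_u); rewrite ltNge u_le.
move=> not_rect; split => //; rewrite in_itv /= andbT leNgt; apply/negP => lt_u.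
have [q [q' [/andP[phi_q q1] /andP[psi_q' q'1] _ _ lt_u']]] :=
  star_lt_rat_above star_cont (phi01 y) (psi01 y) lt_u.
have q01 : 0 <= @ratr R q <= 1.
  by rewrite q1 (le_trans _ phi_q) //; case/andP: (phi01 y).
have q'01 : 0 <= @ratr R q' <= 1.
  by rewrite q'1 (le_trans _ psi_q') //; case/andP: (psi01 y).
by apply: not_rect; exists q => //; exists q' => //; rewrite /rect q01 q'01 lt_u'.
Qed.

End LevelSets.

Section SugenoBounds.
Context {d : measure_display} {T : measurableType d} {R : realType}.
Implicit Types phi h : T -> R.
Context {m : set T -> \bar R}.
Hypothesis m0 : m set0 = 0%E.
Hypothesis m_le :
  forall A B, measurable A -> measurable B -> A `<=` B -> (m A <= m B)%E.

Lemma sugeno_ge0 phi : (0 <= sugeno m phi)%E.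
Proof.
have empty : [set x | (+oo <= (phi x)%:E)%E] = set0.
  by apply/seteqP; split => x //=; rewrite leNgt ltey.
apply: (@le_trans _ _ (Order.min +oo%E (m [set x | (+oo <= (phi x)%:E)%E]))).
  by rewrite empty m0 le_min leey lexx.
by apply: ereal_sup_ubound; exists +oo%E => /=.
Qed.

Lemma sugeno_le_level phi c : 0 <= c -> (forall x, phi x <= 1) ->
  (forall r, c < r <= 1 -> (m [set x | (r%:E <= (phi x)%:E)%E] <= c%:E)%E) ->
  (sugeno m phi <= c%:E)%E.
Proof.
move=> c0 phi1 level_le; apply: ge_ereal_sup => _ [t t0 <-].
have empty_level (t' : \bar R) :
    (1 < t')%E -> [set x | (t' <= (phi x)%:E)%E] = set0.
  move=> t'1; apply/seteqP; split => x //= t'phi.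
  have phix1 : ((phi x)%:E <= 1)%E by rewrite lee_fin.
  by move: (le_lt_trans (le_trans t'phi phix1) t'1); rewrite ltxx.
have [tc|ct] := leP t c%:E; first by rewrite ge_min tc.
have [t1|t1] := leP t 1%E; last by rewrite empty_level // m0 ge_min lee_fin c0 orbT.
move: t ct t0 t1 => [r| |] // cr _ r1.
by rewrite ge_min level_le ?orbT // -!lte_fin cr.
Qed.

Lemma sugeno_itv01 {phi} : (forall x, 0 <= phi x <= 1) ->
  exists2 A, sugeno m phi = A%:E & 0 <= A <= 1.
Proof.
move=> phi01; have : (sugeno m phi <= 1%:E)%E.
  apply: sugeno_le_level => // [x | r /andP[r1 r1']]; first by case/andP: (phi01 x).
  by move: (lt_le_trans r1 r1'); rewrite ltxx.
move: (sugeno_ge0 phi); case: (sugeno m phi) => [A| |] //=.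
by rewrite !lee_fin => A0 A1; exists A; rewrite ?A0.
Qed.

Lemma measure_superlevel_le_sugeno phi s : 0 < s -> (sugeno m phi < s%:E)%E ->
  (m [set x | (s%:E <= (phi x)%:E)%E] <= sugeno m phi)%E.
Proof.
move=> s0 su_s.
have : (Order.min s%:E (m [set x | (s%:E <= (phi x)%:E)%E]) <= sugeno m phi)%E.
  by apply: ereal_sup_ubound; exists s%:E; rewrite //= lte_fin.
by rewrite ge_min leNgt su_s.
Qed.

Lemma measure_strict_superlevel_le_sugeno_powR {h} {e p X a : R} :
  measurable_fun setT h -> (forall x, 0 <= h x <= 1) ->
  0 < e -> 0 < p -> e * p <= 1 -> sugeno m (fun x => h x `^ e) = X%:E ->
  X `^ p < a -> a <= 1 -> (m [set x | (a < h x)%R] <= X%:E)%E.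
Proof.
move=> mh h01 e0 p0 ep1 suX Xa a1.
have X0 : 0 <= X by rewrite -lee_fin -suX sugeno_ge0.
have a0 : 0 < a := le_lt_trans (powR_ge0 X p) Xa.
have X_lt : X < a `^ e.
  apply: (@lt_le_trans _ _ (a `^ p^-1)).
    rewrite -{1}(powRK X p) //; apply: gt0_ltr_powR;
      by rewrite ?nnegrE ?invr_gt0 ?powR_ge0 ?ltW.
  apply: ger_powR_itv01 => //; first by rewrite (ltW a0) a1.
  by rewrite -(ler_pM2r p0) mulVf ?gt_eqF.
have := measure_superlevel_le_sugeno (fun x => h x `^ e) _ (powR_gt0 e a0).
rewrite suX lte_fin => /(_ X_lt); apply: le_trans; apply: m_le.
- exact: measurable_strict_superlevel.
- exact/measurable_superlevel/(measurableT_comp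
    (measurable_realfun.measurable_powR e) mh).
- move=> x /= ah; rewrite lee_fin; have /andP[hx0 _] := h01 x.
  by apply: ge0_ler_powR; rewrite ?nnegrE ?(ltW e0) ?(ltW a0) ?(ltW ah).
Qed.

End SugenoBounds.

Section SugenoStar.
Context {d : measure_display} {T : measurableType d} {R : realType}.
Context {m : set T -> \bar R}.
Hypothesis m0 : m set0 = 0%E.
Hypothesis m_le :
  forall A B, measurable A -> measurable B -> A `<=` B -> (m A <= m B)%E.
Context {f g : T -> R} {star : R -> R -> R}.
Hypotheses (mf : measurable_fun setT f) (mg : measurable_fun setT g).
Hypotheses (f01 : forall x, 0 <= f x <= 1) (g01 : forall x, 0 <= g x <= 1).
Hypothesis cfg : comonotone f g.
Hypothesis star_cont : {within (@unit_int R) `*` (@unit_int R),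
                         continuous (fun p : R * R => star p.1 p.2)}.
Hypothesis star_mono : forall a a' b b' : R, 0 <= a <= 1 -> 0 <= a' <= 1 ->
  0 <= b <= 1 -> 0 <= b' <= 1 -> a <= a' -> b <= b' -> star a b <= star a' b'.
Hypothesis star01 : forall a b : R, 0 <= a <= 1 -> 0 <= b <= 1 -> 0 <= star a b <= 1.

Let mfg : measurable_fun setT (fun x => star (f x) (g x)).
Proof. exact: measurable_fun_star. Qed.

(* The superlevel set of [star f g] above [u] lies in [{a' < f} `|` {b' < g}], a
   union that comonotonicity collapses to one of its two members. *)
Lemma measure_star_superlevel_le {a b u c : R} : 0 <= a <= 1 -> 0 <= b <= 1 ->
  star a b < u -> 0 <= c ->
  (forall a', a < a' <= 1 -> (m [set x | (a' < f x)%R] <= c%:E)%E) ->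
  (forall b', b < b' <= 1 -> (m [set x | (b' < g x)%R] <= c%:E)%E) ->
  (m [set x | (u%:E <= (star (f x) (g x))%:E)%E] <= c%:E)%E.
Proof.
move=> a01 b01 ab_u c0 f_le g_le.
have [q [q' [/andP[aq q1] /andP[bq' q'1] a_q b_q' qq'_u]]] :=
  star_lt_rat_above star_cont a01 b01 ab_u.
have approx_le phi (r r' : R) :
    (forall x, phi x <= 1) -> r < r' \/ r' = 1 -> r' <= 1 ->
    (forall r'', r < r'' <= 1 -> (m [set x | (r'' < phi x)%R] <= c%:E)%E) ->
    (m [set x | (r' < phi x)%R] <= c%:E)%E.
  move=> phi1 [rr' r'1 phi_le | -> _ _]; first by rewrite phi_le ?rr'.
  rewrite (_ : [set x | _] = set0) ?m0 ?lee_fin //.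
  by apply/seteqP; split => x //=; rewrite ltNge phi1.
have /approx_le /(_ a_q q1 f_le) F_le : forall x, f x <= 1.
  by move=> x; case/andP: (f01 x).
have /approx_le /(_ b_q' q'1 g_le) G_le : forall x, g x <= 1.
  by move=> x; case/andP: (g01 x).
have q01 : 0 <= @ratr R q <= 1 by rewrite q1 (le_trans _ aq) //; case/andP: a01.
have q'01 : 0 <= @ratr R q' <= 1 by rewrite q'1 (le_trans _ bq') //; case/andP: b01.
have sub_FG : [set x | (u%:E <= (star (f x) (g x))%:E)%E] `<=`
              [set x | ratr q < f x] `|` [set x | ratr q' < g x].
  move=> x /=; rewrite lee_fin => u_le.
  have [fx|fx] := ltP (ratr q) (f x); first by left.
  have [gx|gx] := ltP (ratr q') (g x); first by right.
  have := star_mono _ _ _ _ (f01 x) q01 (g01 x) q'01 fx gx.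
  by move=> /le_lt_trans /(_ qq'_u); rewrite ltNge u_le.
have mlevel : measurable [set x | (u%:E <= (star (f x) (g x))%:E)%E].
  exact: measurable_superlevel.
have [FG|GF] := comonotone_strict_superlevel_nested cfg (ratr q) (ratr q').
- apply: le_trans G_le; apply: m_le => //; first exact: measurable_strict_superlevel.
  by move=> x /sub_FG[/FG|].
- apply: le_trans F_le; apply: m_le => //; first exact: measurable_strict_superlevel.
  by move=> x /sub_FG[|/GF].
Qed.

Lemma sugeno_star_powR_le (al la a b : R) : 0 < al -> 0 < la -> 1 <= al * la ->
  0 <= a <= 1 -> 0 <= b <= 1 ->
  (forall a', a < a' <= 1 ->
     (m [set x | (a' < f x)%R] <= ((star a b) `^ la^-1)%:E)%E) ->
  (forall b', b < b' <= 1 ->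
     (m [set x | (b' < g x)%R] <= ((star a b) `^ la^-1)%:E)%E) ->
  (sugeno m (fun x => (star (f x) (g x) `^ al)%R) <= ((star a b) `^ la^-1)%:E)%E.
Proof.
move=> al0 la0 alla a01 b01 f_le g_le.
have /andP[w0 _] := star01 _ _ a01 b01.
set c := (star a b) `^ la^-1.
have c0 : 0 <= c := powR_ge0 _ _.
apply: sugeno_le_level => // [x | r /andP[cr r1]].
  by case/andP: (powR_itv01 (star01 _ _ (f01 x) (g01 x)) (ltW al0)).
pose u := r `^ al^-1.
have r0 : 0 <= r := le_trans c0 (ltW cr).
have w_lt_u : star a b < u.
  apply: (@lt_le_trans _ _ (r `^ la)).
    by rewrite -(powR_invK (star a b) la) //; apply: gt0_ltr_powR; rewrite ?nnegrE.
  apply: ger_powR_itv01; rewrite ?r0 ?invr_gt0 //.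
  by rewrite -(ler_pM2l al0) mulfV ?gt_eqF.
apply: le_trans (measure_star_superlevel_le a01 b01 w_lt_u c0 f_le g_le).
apply: m_le.
- exact/measurable_superlevel/(measurableT_comp
    (measurable_realfun.measurable_powR al) mfg).
- exact: measurable_superlevel.
- move=> x /=; rewrite !lee_fin => r_le.
  have fg0 : 0 <= star (f x) (g x) by case/andP: (star01 _ _ (f01 x) (g01 x)).
  rewrite -(powRK (star (f x) (g x)) al) //.
  by apply: ge0_ler_powR; rewrite ?nnegrE ?invr_ge0 ?powR_ge0 ?(ltW al0).
Qed.

End SugenoStar.

Theorem corollary4p5 (d : measure_display) (T : measurableType d) (R : realType)
  (f g : T -> R)
  (mf : measurable_fun setT f) (mg : measurable_fun setT g)
  (f01 : forall x, 0 <= f x <= 1) (g01 : forall x, 0 <= g x <= 1)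
  (cfg : comonotone f g)
  (star : R -> R -> R)
  (star01 : forall a b : R, 0 <= a <= 1 -> 0 <= b <= 1 -> 0 <= star a b <= 1)
  (star_cont : {within (@unit_int R) `*` (@unit_int R),
                 continuous (fun p : R * R => star p.1 p.2)})
  (star_mono : forall a a' b b' : R, 0 <= a <= 1 -> 0 <= a' <= 1 ->
       0 <= b <= 1 -> 0 <= b' <= 1 ->
       a <= a' -> b <= b' -> star a b <= star a' b')
  (star_max : forall a b : R, 0 <= a <= 1 -> 0 <= b <= 1 ->
       Num.max a b <= star a b) :
  forall (m : set T -> \bar R), monotone_measure m -> m setT = 1%E ->
  forall alpha beta gamma lambda upsilon tau : R,
    0 < alpha -> 0 < beta -> 0 < gamma -> 0 < lambda -> 0 < upsilon -> 0 < tau ->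
    1 <= alpha * lambda -> beta * upsilon <= 1 -> gamma * tau <= 1 ->
    tau <= lambda -> upsilon <= lambda ->
    (fine (sugeno m (fun x => (star (f x) (g x)) `^ alpha))) `^ lambda
    <= star ((fine (sugeno m (fun x => f x `^ beta))) `^ upsilon)
            ((fine (sugeno m (fun x => g x `^ gamma))) `^ tau).
Proof.
move=> m [m0 _ _ m_le] _ al be ga la up ta al0 be0 ga0 la0 up0 ta0
  alla beup gata tala upla.
have [A HA A01] := sugeno_itv01 m0 (fun x => powR_itv01 (f01 x) (ltW be0)).
have [B HB B01] := sugeno_itv01 m0 (fun x => powR_itv01 (g01 x) (ltW ga0)).
have [C HC C01] :=
  sugeno_itv01 m0 (fun x => powR_itv01 (star01 _ _ (f01 x) (g01 x)) (ltW al0)).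
rewrite HA HB HC /=.
set a := A `^ up; set b := B `^ ta.
have a01 : 0 <= a <= 1 by apply: powR_itv01 A01 (ltW up0).
have b01 : 0 <= b <= 1 by apply: powR_itv01 B01 (ltW ta0).
have /andP[w0 _] := star01 _ _ a01 b01.
have max_le := star_max _ _ a01 b01.
have a_le : a <= star a b by apply: le_trans max_le; rewrite le_max lexx.
have b_le : b <= star a b by apply: le_trans max_le; rewrite le_max lexx orbT.
have Ac : A <= star a b `^ la^-1 := le_powR_inv A01 up0 upla a_le.
have Bc : B <= star a b `^ la^-1 := le_powR_inv B01 ta0 tala b_le.
have Cc : C <= star a b `^ la^-1.
  rewrite -lee_fin -HC.
  apply: (sugeno_star_powR_le m0 m_le mf mg f01 g01 cfg star_cont star_mono star01)
    => // [a' /andP[aa' a'1] | b' /andP[bb' b'1]].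
    apply: le_trans (measure_strict_superlevel_le_sugeno_powR
      m0 m_le mf f01 be0 up0 beup HA aa' a'1) _.
    by rewrite lee_fin.
  apply: le_trans (measure_strict_superlevel_le_sugeno_powR
    m0 m_le mg g01 ga0 ta0 gata HB bb' b'1) _.
  by rewrite lee_fin.
rewrite -(powR_invK (star a b) la) //.
by apply: ge0_ler_powR; rewrite ?nnegrE ?(ltW la0) ?powR_ge0 //; case/andP: C01.
Qed.
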